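(* Let $X$ be a real Banach space with a normalized Schauder basis $\mathcal B=(e_n)_{n=1}^\infty$ with biorthogonal functionals $(e_n^* )$ which is unconditional or boundedly complete, and let $\mathcal E=(\varepsilon_n)_{n=1}^\infty$ be a sequence of nonnegative numbers. If the brick $K_{\mathcal B,\mathcal E}$ has finite extreme radius, then $K_{\mathcal B,\mathcal E}$ is compact.
   Context: The brick is $K_{\mathcal B,\mathcal E}=\{x\in X:\ |e_n^*(x)|\le\varepsilon_n \text{ for all } n\}$. A point $x_0\in A$ is an extreme point of $A$ if for every nonzero $x\in X$ there is $\lambda\in[-1,1]$ with $x_0+\lambda x\notin A$. The extreme radius of $K$ is the supremum of $\|x_0\|$ over extreme points $x_0$ of $K$ if an extreme point exists, and $\infty$ otherwise. A basis is unconditional if $\sum_ne_n^*(x)e_n$ converges unconditionally for every $x$; it is boundedly complete if $\sup_n\|\sum_{k=1}^na_ke_k\|<\infty$ implies convergence of $\sum_na_ne_n$. *)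

From HB Require Import structures.
From mathcomp Require Import all_boot all_order all_algebra.
From mathcomp Require Import all_classical all_reals all_analysis.
Set Implicit Arguments. Unset Strict Implicit. Unset Printing Implicit Defensive.
Import Order.TTheory GRing.Theory Num.Theory numFieldNormedType.Exports.
Local Open Scope classical_set_scope.
Local Open Scope ring_scope.

Section Bricks.
Variables (R : realType) (X : normedModType R).

Definition schauder_basis (e : nat -> X) (estar : nat -> X -> R) : Prop :=
  (forall x, series (fun n => estar n x *: e n) @ \oo --> x) /\
  (forall x (a : nat -> R), series (fun n => a n *: e n) @ \oo --> x ->
     forall n, a n = estar n x).

Definition normalized (e : nat -> X) : Prop := forall n, `|e n| = 1.

Definition unconditional (e : nat -> X) (estar : nat -> X -> R) : Prop :=
  forall x (s : nat -> nat), bijective s ->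
    cvg (series (fun n => estar (s n) x *: e (s n)) @ \oo).

Definition boundedly_complete (e : nat -> X) : Prop :=
  forall a : nat -> R,
    (exists M : R, forall n, `|series (fun k => a k *: e k) n| <= M) ->
    cvg (series (fun k => a k *: e k) @ \oo).

Definition brick (estar : nat -> X -> R) (eps : nat -> R) : set X :=
  [set x | forall n, `|estar n x| <= eps n].

Definition extreme_point (A : set X) (x0 : X) : Prop :=
  A x0 /\ forall x, x != 0 ->
    exists2 l : R, -1 <= l <= 1 & ~ A (x0 + l *: x).

Definition extreme_radius (A : set X) : \bar R :=
  if pselect (exists x0, extreme_point A x0)
  then ereal_sup [set (`|x0|)%:E | x0 in extreme_point A]
  else +oo%E.

End Bricks.

From HB Require Import structures.
From mathcomp Require Import all_boot all_order all_algebra.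
From mathcomp Require Import all_classical all_reals all_analysis.
From mathcomp Require Import ring lra.

(* An x in the brick is an extreme point iff |e_n^*(x)| = eps_n for every n.
   Flipping the signs of finitely many coordinates of one extreme point x0 gives
   another one, so a bound M on the norms of extreme points bounds every finite
   subsum of the expansion of x0 by (|x0| + M) / 2.  Unconditionality (through a
   rearrangement gathering the selected terms of disjoint blocks) or bounded
   completeness (through the subseries carried by those terms) turns this bound
   into uniformly small tails of such subsums.  Every point of the box
   prod_n [-eps_n, eps_n] has coordinates t_n = l_n e_n^*(x0) with |l_n| <= 1,
   so by convexity of the norm the series sum_n t_n e_n have uniformly small
   tails.  Hence t |-> sum_n t_n e_n is continuous from the box, compact for the
   product topology, onto the brick. *)

Import Order.TTheory GRing.Theory Num.Theory numFieldNormedType.Exports.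
Set Implicit Arguments. Unset Strict Implicit. Unset Printing Implicit Defensive.
Local Open Scope classical_set_scope.
Local Open Scope ring_scope.

Section ExtremeRadius.
Variables (R : realType) (X : normedModType R) (A : set X).

Lemma extreme_radius_lt_pinfty : (extreme_radius A < +oo)%E ->
  (exists x0, extreme_point A x0) /\
  exists M, forall y, extreme_point A y -> `|y| <= M.
Proof.
rewrite /extreme_radius; destruct pselect as [hex|nex]; last by rewrite ltxx.
set S := ereal_sup _ => hlt; split => //; have [x0 hx0] := hex.
have ub y : extreme_point A y -> ((`|y|)%:E <= S)%E.
  by move=> hy; apply: ereal_sup_ubound; exists y.
have := ub _ hx0.
case: S hlt ub => [r| |] //= _ ub _.
by exists r => y /ub; rewrite lee_fin.
Qed.

End ExtremeRadius.

Section SignedSums.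
Variables (R : realType) (X : normedModType R).

Lemma norm_le_signed_endpoint (u z : X) (l : R) : `|l| <= 1 ->
  exists b : bool, `|u + l *: z| <= `|u + (if b then z else - z)|.
Proof.
rewrite ler_norml => /andP[l_ge l_le].
have -> : u + l *: z = ((1 + l) / 2) *: (u + z) + ((1 - l) / 2) *: (u - z).
  rewrite !scalerDr !scalerN addrACA -scalerDl -scalerBl.
  have -> : (1 + l) / 2 + (1 - l) / 2 = 1 :> R by field.
  have -> : (1 + l) / 2 - (1 - l) / 2 = l :> R by field.
  by rewrite scale1r.
have p_ge0 : 0 <= (1 + l) / 2 by lra.
have q_ge0 : 0 <= (1 - l) / 2 by lra.
have := ler_normD ((1 + l) / 2 *: (u + z)) ((1 - l) / 2 *: (u - z)).
rewrite !normrZ -!normrM (ger0_norm p_ge0) (ger0_norm q_ge0) => h.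
have [le_pm|lt_mp] := leP `|u + z| `|u - z|.
  exists false; apply: (le_trans h); have := ler_wpM2l p_ge0 le_pm; nra.
exists true; apply: (le_trans h); have := ler_wpM2l q_ge0 (ltW lt_mp); nra.
Qed.

Lemma norm_sum_le_signed (r : seq nat) (v : X) (w : nat -> X) (l : nat -> R) :
  uniq r -> (forall i, `|l i| <= 1) -> exists P : pred nat,
  `|v + \sum_(i <- r) l i *: w i| <=
    `|v + \sum_(i <- r) (if P i then w i else - w i)|.
Proof.
move=> + l_le1; elim: r v => [|j r IH] v /=.
  by move=> _; exists xpred0; rewrite !big_nil.
move=> /andP[jr ur]; have [P HP] := IH (v + l j *: w j) ur.
set T := \sum_(i <- r) (if P i then w i else - w i) in HP.
have [b hb] := norm_le_signed_endpoint (v + T) (w j) (l_le1 j).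
exists (fun i => if i == j then b else P i).
rewrite !big_cons eqxx.
have -> : \sum_(i <- r) (if (if i == j then b else P i) then w i else - w i) = T.
  apply: eq_big_seq => i ir; have [ij|//] := eqVneq i j.
  by move: jr; rewrite -ij ir.
rewrite addrA; apply: (le_trans HP).
rewrite -(addrA v) (addrC (l j *: w j)) addrA; apply: (le_trans hb).
by rewrite -(addrA v) (addrC T).
Qed.

End SignedSums.

Section SubsumsCauchy.
Variables (R : realType) (X : normedModType R).

Definition subsums_cauchy (w : nat -> X) : Prop :=
  forall d, 0 < d -> exists N, forall m (P : pred nat),
    `|\sum_(N <= i < m | P i) w i| <= d.

Lemma not_subsums_cauchy_blocks (w : nat -> X) : ~ subsums_cauchy w ->
  exists2 d, 0 < d & exists (b : nat -> nat) (Q : nat -> pred nat),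
    [/\ b 0 = 0%N, forall k, (b k < b k.+1)%N &
        forall k, d < `|\sum_(b k <= i < b k.+1 | Q k i) w i|].
Proof.
move=> /existsNP[d /not_implyP[d_gt0 nN]]; exists d => //.
have big_from N : exists p : nat * pred nat,
    d < `|\sum_(N <= i < p.1 | p.2 i) w i|.
  apply: contrapT => hN; apply: nN; exists N => m P.
  by rewrite leNgt; apply/negP => hlt; apply: hN; exists (m, P).
have [f hf] := choice big_from.
pose b := fix b k := if k is k'.+1 then (f (b k')).1 else 0%N.
exists b, (fun k => (f (b k)).2); split => //.
move=> k; rewrite ltnNge; apply/negP => hle; have := hf (b k).
by rewrite /= (big_geq hle) normr0 ltNge (ltW d_gt0).
Qed.

Lemma cvg_series_cauchy (u : nat -> X) (d : R) : 0 < d ->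
  cvg (series u @ \oo) -> exists N, forall n1 n2, (N <= n1)%N -> (N <= n2)%N ->
    `|\sum_(n1 <= k < n2) u k| < d.
Proof.
move=> d_gt0 /cvg_cauchy/cauchy_seriesP/(_ d d_gt0).
move=> [[A1 A2] /= [[N1 _ hN1] [N2 _ hN2]] hA].
exists (maxn N1 N2) => n1 n2 h1 h2; apply: (hA (n1, n2)); split.
  by apply: hN1; exact: leq_trans (leq_maxl _ _) h1.
by apply: hN2; exact: leq_trans (leq_maxr _ _) h2.
Qed.

End SubsumsCauchy.

Section Blocks.
Variable b : nat -> nat.
Hypothesis b_incr : forall k, (b k < b k.+1)%N.

Lemma block_ge k : (k <= b k)%N.
Proof. by elim: k => // k IH; exact: leq_ltn_trans IH (b_incr k). Qed.

(* Bounding [k] by [j] keeps the quantifier finite; no block is missed since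
   [k <= b k]. *)
Definition in_block_with (Q : nat -> pred nat) (j : nat) :=
  [exists k : 'I_j.+1, (b k <= j < b k.+1)%N && Q k j].

Lemma in_block_withE (Q : nat -> pred nat) k j : (b k <= j < b k.+1)%N ->
  in_block_with Q j = Q k j.
Proof.
have b_homo : {homo b : k1 k2 / (k1 <= k2)%N}.
  by apply: (homo_leq leqnn leq_trans) => i; exact: ltnW.
move=> /andP[hj1 hj2]; apply/existsP/idP.
  move=> [k' /andP[/andP[h1 h2] hq]]; suff <- : (k' : nat) = k by [].
  apply/eqP; rewrite eqn_leq; apply/andP; split; rewrite leqNgt; apply/negP => hlt.
    by have := leq_trans (b_homo _ _ hlt) h1; rewrite leqNgt hj2.
  by have := leq_trans (b_homo _ _ hlt) hj1; rewrite leqNgt h2.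
move=> hq; have kj : (k < j.+1)%N by rewrite ltnS (leq_trans (block_ge k) hj1).
by exists (Ordinal kj); rewrite /= hj1 hj2 hq.
Qed.

End Blocks.

Lemma boundedly_complete_subsums_cauchy (R : realType) (X : normedModType R)
    (e : nat -> X) (a : nat -> R) (B : R) : boundedly_complete e ->
  (forall n (P : pred nat), `|\sum_(0 <= i < n | P i) a i *: e i| <= B) ->
  subsums_cauchy (fun i => a i *: e i).
Proof.
move=> bc hB; apply: contrapT => /not_subsums_cauchy_blocks[d d_gt0 [b [Q [_ b_incr hQ]]]].
pose c j := if in_block_with b Q j then a j else 0.
have c_cvg : cvg (series (fun k => c k *: e k) @ \oo).
  apply: bc; exists B => n; rewrite /series /=.
  rewrite (eq_bigr (fun k => if in_block_with b Q k then a k *: e k else 0)).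
    by rewrite -big_mkcond; exact: hB.
  by move=> k _; rewrite /c; case: ifP => //; rewrite scale0r.
have [N hN] := cvg_series_cauchy d_gt0 c_cvg.
have bN := block_ge b_incr N.
have := hN _ _ bN (leq_trans bN (ltnW (b_incr N))).
suff -> : \sum_(b N <= k < b N.+1) c k *: e k =
          \sum_(b N <= i < b N.+1 | Q N i) a i *: e i.
  by move=> h; have := lt_trans (hQ N) h; rewrite ltxx.
rewrite [RHS]big_mkcond [LHS]big_nat_cond [RHS]big_nat_cond; apply: eq_bigr => j /andP[hj _].
by rewrite /c (in_block_withE b_incr Q hj); case: ifP; rewrite ?scale0r.
Qed.

Fixpoint cat_blocks (l : nat -> seq nat) (k : nat) : seq nat :=
  if k is k'.+1 then cat_blocks l k' ++ l k' else [::].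

(* The n-th entry of l 0 ++ l 1 ++ ...; the first n.+1 blocks suffice as long
   as they have more than n entries. *)
Definition blocks_perm (l : nat -> seq nat) (n : nat) : nat :=
  nth 0%N (cat_blocks l n.+1) n.

Section BlocksPerm.
Variables (b : nat -> nat) (l : nat -> seq nat).
Hypothesis b0 : b 0 = 0%N.
Hypothesis b_incr : forall k, (b k < b k.+1)%N.
Hypothesis l_perm : forall k, perm_eq (l k) (index_iota (b k) (b k.+1)).

Lemma perm_cat_blocks k : perm_eq (cat_blocks l k) (iota 0 (b k)).
Proof.
elim: k => [|k IH] /=; first by rewrite b0.
have -> : iota 0 (b k.+1) = iota 0 (b k) ++ index_iota (b k) (b k.+1).
  by rewrite /index_iota -{1}(subnKC (ltnW (b_incr k))) iotaD add0n.
by rewrite perm_cat.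
Qed.

Lemma size_cat_blocks k : size (cat_blocks l k) = b k.
Proof. by rewrite (perm_size (perm_cat_blocks k)) size_iota. Qed.

Lemma uniq_cat_blocks k : uniq (cat_blocks l k).
Proof. by rewrite (perm_uniq (perm_cat_blocks k)) iota_uniq. Qed.

Lemma mem_cat_blocks k x : (x \in cat_blocks l k) = (x < b k)%N.
Proof. by rewrite (perm_mem (perm_cat_blocks k)) mem_iota. Qed.

Lemma cat_blocks_prefix k k' : (k <= k')%N ->
  exists t, cat_blocks l k' = cat_blocks l k ++ t.
Proof.
elim: k' => [|k' IH]; first by rewrite leqn0 => /eqP->; exists [::]; rewrite cats0.
rewrite leq_eqVlt => /orP[/eqP->|]; first by exists [::]; rewrite cats0.
by rewrite ltnS => /IH [t et]; exists (t ++ l k'); rewrite /= et catA.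
Qed.

Lemma blocks_permE k j : (j < b k)%N -> blocks_perm l j = nth 0%N (cat_blocks l k) j.
Proof.
move=> hj; have hj1 : (j < b j.+1)%N := leq_trans (ltnSn j) (block_ge b_incr j.+1).
have [t1 e1] := cat_blocks_prefix (leq_maxl k j.+1).
have [t2 e2] := cat_blocks_prefix (leq_maxr k j.+1).
have : nth 0%N (cat_blocks l j.+1 ++ t2) j = nth 0%N (cat_blocks l k ++ t1) j.
  by rewrite -e1 -e2.
by rewrite (nth_cat _ (cat_blocks l j.+1)) (nth_cat _ (cat_blocks l k)) !size_cat_blocks hj hj1.
Qed.

Lemma blocks_perm_bij : bijective (blocks_perm l).
Proof.
have mem_succ n : n \in cat_blocks l n.+1.
  by rewrite mem_cat_blocks (leq_trans (ltnSn n) (block_ge b_incr n.+1)).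
exists (fun n => index n (cat_blocks l n.+1)) => n.
  set m := blocks_perm l n; set K := maxn n.+1 m.+1.
  have nK : (n < b K)%N := leq_trans (leq_maxl n.+1 m.+1) (block_ge b_incr K).
  have [t eK] := cat_blocks_prefix (leq_maxr n.+1 m.+1).
  have -> : index m (cat_blocks l m.+1) = index m (cat_blocks l K).
    by rewrite eK [RHS]index_cat mem_succ.
  by rewrite /m (blocks_permE nK) index_uniq ?uniq_cat_blocks ?size_cat_blocks.
have ilt : (index n (cat_blocks l n.+1) < b n.+1)%N.
  by rewrite -size_cat_blocks index_mem.
by rewrite (blocks_permE ilt) nth_index.
Qed.

Lemma blocks_perm_sum (V : zmodType) (f : nat -> V) N k : (N <= b k)%N ->
  \sum_(0 <= j < N) f (blocks_perm l j) = \sum_(x <- take N (cat_blocks l k)) f x.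
Proof.
elim: N => [|N IH] hN; first by rewrite big_geq // take0 big_nil.
rewrite big_nat_recr //= IH ?(ltnW hN) // (take_nth 0%N) ?size_cat_blocks //.
by rewrite -cats1 big_cat big_seq1 (blocks_permE hN).
Qed.

Lemma blocks_perm_sum_block (V : zmodType) (f : nat -> V) k n :
  (n <= size (l k))%N ->
  \sum_(b k <= j < b k + n) f (blocks_perm l j) = \sum_(x <- take n (l k)) f x.
Proof.
rewrite (perm_size (l_perm k)) size_iota leq_subRL ?(ltnW (b_incr k)) // => hn.
have := blocks_perm_sum f hn.
rewrite (big_cat_nat (leq0n (b k)) (leq_addr n (b k))) (blocks_perm_sum _ (leqnn (b k))) /=.
rewrite take_cat size_cat_blocks ltnNge leq_addr /= addKn.
by rewrite take_oversize ?size_cat_blocks // big_cat => /addrI.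
Qed.

End BlocksPerm.

Lemma rearrangements_subsums_cauchy (R : realType) (X : normedModType R)
    (w : nat -> X) :
  (forall s, bijective s -> cvg (series (fun n => w (s n)) @ \oo)) ->
  subsums_cauchy w.
Proof.
move=> w_unc; apply: contrapT => /not_subsums_cauchy_blocks[d d_gt0 [b [Q [b0 b_incr hQ]]]].
pose blk k := index_iota (b k) (b k.+1).
pose l k := [seq x <- blk k | Q k x] ++ [seq x <- blk k | ~~ Q k x].
have l_perm k : perm_eq (l k) (blk k) by rewrite /l perm_filterC.
have [N hN] := cvg_series_cauchy d_gt0 (w_unc _ (blocks_perm_bij b0 b_incr l_perm)).
set F := [seq x <- blk N | Q N x].
have szF : (size F <= size (l N))%N by rewrite size_cat leq_addr.
have bN := block_ge b_incr N.
have := hN _ _ bN (leq_trans bN (leq_addr (size F) _)).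
rewrite (blocks_perm_sum_block b0 b_incr l_perm _ szF) take_size_cat //.
rewrite big_filter => h; have := lt_trans (hQ N) h; by rewrite ltxx.
Qed.

Section Coordinates.
Variables (R : realType) (X : normedModType R).
Variables (e : nat -> X) (estar : nat -> X -> R) (eps : nat -> R).
Hypothesis basis : schauder_basis e estar.
Hypothesis normalized_e : normalized e.

Lemma estarDZ n x z l : estar n (x + l *: z) = estar n x + l * estar n z.
Proof.
apply/esym; apply: (proj2 basis (x + l *: z) (fun k => estar k x + l * estar k z)).
have -> : (fun k => (estar k x + l * estar k z) *: e k) =
    (fun k => estar k x *: e k) + l *: (fun k => estar k z *: e k).
  by apply/funext => k /=; rewrite scalerDl -scalerA.
by rewrite seriesD seriesZ; apply: cvgD; [exact: (proj1 basis) | exact: cvgZr (proj1 basis z)].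
Qed.

Lemma estar0 n : estar n 0 = 0.
Proof.
apply/esym; apply: (proj2 basis 0 (fun _ => 0)).
have -> : series (fun k => (0 : R) *: e k) = fun _ => 0.
  by apply/funext => k; apply: big1 => i _; exact: scale0r.
exact: cvg_cst.
Qed.

Lemma estarD n x z : estar n (x + z) = estar n x + estar n z.
Proof. by rewrite -[z in LHS]scale1r estarDZ mul1r. Qed.

Lemma estarZ n l z : estar n (l *: z) = l * estar n z.
Proof. by rewrite -[l *: z]add0r estarDZ estar0 add0r. Qed.

Lemma estar_basis n k : estar n (e k) = (n == k)%:R.
Proof.
apply/esym; apply: (proj2 basis (e k) (fun m => (m == k)%:R)).
apply: cvg_near_cst; exists k.+1 => // N /= kN.
rewrite /series /= (bigD1_seq k) ?mem_index_iota ?iota_uniq //= eqxx scale1r.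
by rewrite big1 ?addr0 // => i /negbTE ->; exact: scale0r.
Qed.

Lemma estar_sum k (r : seq nat) (P : pred nat) (c : nat -> R) : uniq r ->
  estar k (\sum_(i <- r | P i) c i *: e i) = if (k \in r) && P k then c k else 0.
Proof.
elim: r k => [|j r IH] k /=; first by rewrite big_nil estar0.
move=> /andP[jr ur]; rewrite big_cons in_cons.
have [{k}->|kj] := eqVneq k j; case: ifP => Pj /=.
- by rewrite estarD IH // estarZ estar_basis eqxx (negbTE jr) mulr1 addr0.
- by rewrite IH // (negbTE jr).
- by rewrite estarD IH // estarZ estar_basis (negbTE kj) mulr0 add0r.
- exact: IH.
Qed.

Lemma estar_eq0 x : (forall n, estar n x = 0) -> x = 0.
Proof.
move=> x0; have := proj1 basis x.
have -> : series (fun n => estar n x *: e n) = fun _ => 0.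
  by apply/funext => k; apply: big1 => i _; rewrite x0 scale0r.
by move/(cvg_lim (@norm_hausdorff R X)); rewrite lim_cst.
Qed.

Lemma extreme_brickP y :
  extreme_point (brick estar eps) y <-> forall k, `|estar k y| = eps k.
Proof.
split=> [[y_in y_ext] k|y_eq].
  apply/eqP; rewrite eq_le y_in leNgt; apply/negP => hlt.
  have d_gt0 : 0 < eps k - `|estar k y| by rewrite subr_gt0.
  have ek_neq0 : (eps k - `|estar k y|) *: e k != 0.
    by rewrite -normr_eq0 normrZ normalized_e mulr1 gtr0_norm // gt_eqF.
  have [l /andP[l_ge l_le] []] := y_ext _ ek_neq0; move=> n.
  rewrite scalerA estarDZ estar_basis.
  have [->|nk] := eqVneq n k; last by rewrite mulr0 addr0; exact: y_in.
  rewrite mulr1; apply: (le_trans (ler_normD _ _)); rewrite normrM (gtr0_norm d_gt0).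
  have : `|l| <= 1 by rewrite ler_norml l_ge l_le.
  by move/(ler_wpM2r (ltW d_gt0)); rewrite mul1r; lra.
split=> [k|x x_neq0]; first by rewrite y_eq.
have [k xk_neq0] : exists k, estar k x != 0.
  apply/not_existsP => hx; move/eqP: x_neq0; apply; apply: estar_eq0 => n.
  by apply/eqP/negP => /negP h; apply: (hx n).
have [h|h] := ltP (eps k) `|estar k y + estar k x|.
  exists 1; first by apply/andP; split => //; lra.
  by move=> /(_ k); rewrite estarDZ mul1r leNgt h.
exists (-1); first by apply/andP; split => //; lra.
move=> /(_ k); rewrite estarDZ mulN1r => h2.
move: h h2 xk_neq0; rewrite -(y_eq k) !ler_norml.
have [y0|y0] := leP 0 (estar k y).
  rewrite (ger0_norm y0) => /andP[? ?] /andP[? ?] /eqP; apply; lra.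
rewrite (ltr0_norm y0) => /andP[? ?] /andP[? ?] /eqP; apply; lra.
Qed.

End Coordinates.

Definition coord_box (R : realType) (eps : nat -> R) : set {ptws nat -> R} :=
  [set t | forall i, `|t i| <= eps i].

Lemma coord_box_compact (R : realType) (eps : nat -> R) : compact (coord_box eps).
Proof.
have -> : coord_box eps = [set t | forall i, `[- eps i, eps i]%classic (t i)].
  by apply/seteqP; split => t /= t_in i; have := t_in i; rewrite /= in_itv /= ler_norml.
exact: tychonoff (fun i => @segment_compact R _ _).
Qed.

Section BrickExpansion.
Variables (R : realType) (X : completeNormedModType R).
Variables (e : nat -> X) (estar : nat -> X -> R) (eps : nat -> R).
Hypothesis basis : schauder_basis e estar.
Hypothesis normalized_e : normalized e.
Hypothesis unc_or_bc : unconditional e estar \/ boundedly_complete e.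
Variables (x0 : X) (M : R).
Hypothesis x0_ext : extreme_point (brick estar eps) x0.
Hypothesis M_bound : forall y, extreme_point (brick estar eps) y -> `|y| <= M.

Let x0_coord k : `|estar k x0| = eps k.
Proof. by move: k; apply/(extreme_brickP eps basis normalized_e). Qed.

(* Flipping the signs of the coordinates of x0 carried by S gives the extreme
   point x0 - 2 S, so 2 |S| <= |x0| + M. *)
Lemma extreme_subsum_bound m m' (P : pred nat) :
  `|\sum_(m <= i < m' | P i) estar i x0 *: e i| <= (`|x0| + M) / 2.
Proof.
set S := \sum_(m <= i < m' | P i) estar i x0 *: e i.
have flip_ext : extreme_point (brick estar eps) (x0 + (-2) *: S).
  apply/(extreme_brickP eps basis normalized_e) => k.
  rewrite (estarDZ basis) (estar_sum basis) ?iota_uniq //.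
  case: ifP => _; last by rewrite mulr0 addr0.
  have -> : estar k x0 + -2 * estar k x0 = - estar k x0 by ring.
  by rewrite normrN.
have := M_bound flip_ext.
have : `|2 *: S| <= `|x0| + `|x0 + (-2) *: S|.
  have -> : 2 *: S = x0 - (x0 + (-2) *: S).
    by rewrite opprD addrA subrr add0r scaleNr opprK.
  exact: ler_normB.
rewrite normrZ (ger0_norm (ler0n _ 2)); lra.
Qed.

Lemma expansion_subsums_cauchy : subsums_cauchy (fun i => estar i x0 *: e i).
Proof.
case: unc_or_bc => [unc|bc].
  by apply: rearrangements_subsums_cauchy => s; exact: unc.
apply: (boundedly_complete_subsums_cauchy (B := (`|x0| + M) / 2)) => // n P.
exact: extreme_subsum_bound.
Qed.

Lemma box_tail_uniform d : 0 < d -> exists N, forall t, coord_box eps t ->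
  forall m m', (N <= m)%N -> `|\sum_(m <= i < m') t i *: e i| <= d.
Proof.
move=> d_gt0; have /(_ (d / 2)) [|N N_tail] := expansion_subsums_cauchy; first lra.
exists N => t t_box m m' Nm.
pose a i := estar i x0; pose l i := t i / a i.
have l_le1 i : `|l i| <= 1.
  have [a0|a_neq0] := eqVneq (a i) 0; first by rewrite /l a0 invr0 mulr0 normr0.
  by rewrite normrM normfV ler_pdivrMr ?normr_gt0 // mul1r x0_coord; exact: t_box.
have t_eq i : t i *: e i = l i *: (a i *: e i).
  rewrite scalerA /l; have [a0|a_neq0] := eqVneq (a i) 0; last by rewrite divfK.
  have := t_box i; rewrite -x0_coord -/(a i) a0 normr0 normr_le0 => /eqP->.
  by rewrite !mul0r.
rewrite (eq_bigr _ (fun i _ => t_eq i)).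
have [P] := norm_sum_le_signed 0 (fun i => a i *: e i) (iota_uniq m (m' - m)) l_le1.
rewrite !add0r => /le_trans; apply; rewrite (bigID P) /=.
have -> : \sum_(m <= i < m' | P i) (if P i then a i *: e i else - (a i *: e i))
    = \sum_(m <= i < m' | P i) a i *: e i by apply: eq_bigr => i ->.
have -> : \sum_(m <= i < m' | ~~ P i) (if P i then a i *: e i else - (a i *: e i))
    = - \sum_(m <= i < m' | ~~ P i) a i *: e i.
  by rewrite -sumrN; apply: eq_bigr => i /negbTE ->.
apply: (le_trans (ler_normD _ _)); rewrite normrN !(big_nat_widenl _ _ _ _ _ Nm).
have := N_tail m' (fun i => P i && (m <= i)%N).
have := N_tail m' (fun i => ~~ P i && (m <= i)%N).
rewrite /a; lra.
Qed.

Definition expansion (t : nat -> R) : X := lim (series (fun n => t n *: e n) @ \oo).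

Lemma expansion_cvg t : coord_box eps t ->
  series (fun n => t n *: e n) @ \oo --> expansion t.
Proof.
move=> t_box; apply: cauchy_cvg; apply/cauchy_seriesP => d d_gt0.
have [|N N_tail] := @box_tail_uniform (d / 2); first lra.
exists ([set n | (N <= n)%N], [set n | (N <= n)%N]); first by split; exists N.
move=> [n1 n2] /= [h1 h2]; apply: le_lt_trans (N_tail t t_box n1 n2 h1) _; lra.
Qed.

Lemma expansion_tail_uniform d : 0 < d -> exists N, forall t, coord_box eps t ->
  forall m, (N <= m)%N -> `|expansion t - series (fun n => t n *: e n) m| <= d.
Proof.
move=> d_gt0; have [N N_tail] := box_tail_uniform d_gt0.
exists N => t t_box m Nm; set s := series (fun n => t n *: e n).
have : closed_ball (s m) d (expansion t).
  apply: (closed_cvg _ (@closed_ball_closed _ _ (s m) d) _ _ (expansion_cvg t_box)).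
  exists m => // n /= mn; rewrite closed_ballE // /closed_ball_ /= distrC.
  by rewrite /s sub_series mn; exact: N_tail.
by rewrite closed_ballE // /closed_ball_ /= distrC.
Qed.

Lemma expansion_continuous : {within coord_box eps, continuous expansion}.
Proof.
apply/subspace_continuousP => t t_box; apply/cvgrPdist_lt => d d_gt0.
have [|N N_tail] := @expansion_tail_uniform (d / 4); first lra.
have N1_gt0 : 0 < N.+1%:R :> R by rewrite ltr0n.
pose del := d / 4 / N.+1%:R.
have del_gt0 : 0 < del by rewrite divr_gt0 ?divr_gt0.
have near_t : \forall u \near t, forall i : 'I_N, `|t i - (u : {ptws nat -> R}) i| < del.
  apply: (@filter_forall _ 'I_N
    (fun (i : 'I_N) (u : {ptws nat -> R}) => `|t i - u i| < del) (nbhs t) _) => i.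
  have proj_cvg : (fun u : {ptws nat -> R} => u i) @ t --> t i.
    exact: (@proj_continuous nat (fun _ => R) i t).
  by move: proj_cvg => /cvgrPdist_lt/(_ del del_gt0).
rewrite near_withinE; apply: filterS near_t => u u_near u_box.
set st := series (fun n => t n *: e n) N; set su := series (fun n => u n *: e n) N.
have partial_close : `|st - su| <= d / 4.
  rewrite /st /su /series /= -sumrB big_mkord.
  apply: (le_trans (ler_norm_sum _ _ _)).
  under eq_bigr => i _ do rewrite -scalerBl normrZ normalized_e mulr1.
  apply: (@le_trans _ _ (\sum_(i < N) del)); first by apply: ler_sum => i _; exact: ltW.
  rewrite sumr_const card_ord -[_ *+ N]mulr_natr.
  have del_N1 : del * N.+1%:R = d / 4 by rewrite /del divfK // gt_eqF.
  have : N%:R <= N.+1%:R :> R by rewrite ler_nat.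
  nra.
have -> : expansion t - expansion u =
    (expansion t - st) + (st - su) - (expansion u - su).
  by rewrite opprB !addrA !subrK.
have := N_tail t t_box N (leqnn N); have := N_tail u u_box N (leqnn N).
move=> hu ht; apply: (le_lt_trans (ler_normB _ _)).
apply: (le_lt_trans (lerD (ler_normD _ _) (lexx _))); lra.
Qed.

Lemma brick_expansion_image : brick estar eps = expansion @` coord_box eps.
Proof.
apply/seteqP; split => [x x_in|_ [t t_box <-] n].
  exists (fun n => estar n x) => //.
  by apply: (cvg_lim (@norm_hausdorff R X)); exact: (proj1 basis x).
by rewrite -(proj2 basis _ t (expansion_cvg t_box) n); exact: t_box.
Qed.

End BrickExpansion.

Theorem theorem3p5 (R : realType) (X : completeNormedModType R)
  (e : nat -> X) (estar : nat -> X -> R) (eps : nat -> R) :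
  schauder_basis e estar ->
  normalized e ->
  unconditional e estar \/ boundedly_complete e ->
  (forall n, 0 <= eps n) ->
  (extreme_radius (brick estar eps) < +oo)%E ->
  compact (brick estar eps).
Proof.
move=> basis normalized_e unc_or_bc _ /extreme_radius_lt_pinfty[[x0 x0_ext] [M M_bound]].
rewrite (brick_expansion_image basis normalized_e unc_or_bc x0_ext M_bound).
apply: continuous_compact; last exact: coord_box_compact.
exact: (expansion_continuous basis normalized_e unc_or_bc x0_ext M_bound).
Qed.
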